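(* For all integers $c$, $n$, and $d$ with $n\ge 1$ and $d\ge 2$, there is a set $A$ of integers with $|A|=2n+2$ such that (i) $[c,c+n]\subseteq 2A$; (ii) $|x-y|\ge d$ for all $x,y\in 2A$ with $x\ne y$ and $x\notin[c,c+n]$; (iii) $\ell^{\sharp}_2(A)=n$.
   Context: For integers $a<b$, $[a,b]=\{j\in\mathbf{Z}: a\le j\le b\}$ is an interval of integers. $2A=\{a+a': a,a'\in A\}$. For a nonempty finite set $A\subseteq\mathbf{Z}$, $\ell^{\sharp}_2(A)$ is the largest integer $n\ge1$ such that $[c,c+n]\subseteq 2A$ for some $c\in\mathbf{Z}$ (undefined if $2A$ contains no interval). *)

(* integers Z, finite sets of integers as duplicate-free lists. *)
From Stdlib Require Import ZArith List.
Open Scope Z_scope.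

Definition in_sumset (A : list Z) (x : Z) : Prop :=
  exists a a', In a A /\ In a' A /\ x = a + a'.

Definition interval_in_sumset (A : list Z) (c n : Z) : Prop :=
  forall j, c <= j <= c + n -> in_sumset A j.

(* ell2sharp A n  <->  l^#_2(A) is defined and equals n, i.e. n >= 1 is the
   largest integer such that [c, c+n] \subseteq 2A for some c. *)
Definition ell2sharp_eq (A : list Z) (n : Z) : Prop :=
  1 <= n /\
  (exists c, interval_in_sumset A c n) /\
  (forall m c, 1 <= m -> interval_in_sumset A c m -> m <= n).

(* The set is built pair by pair.  Suppose A (with 2m elements) already has
   [c, c+m-1] in 2A, its other sums lie outside [c-d, c+N+d] and are d-apart
   from every sum, and its elements are d-apart.  Add L and q = c+m-L with L
   huge compared to A, c and N.  The new sums fall into five clusters around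
   2L, L, 0, -L, -2L: {2L}, L+A, 2A together with L+q = c+m, q+A, {2q}.
   Distinct clusters are far apart, and inside a cluster the separation is
   inherited from A or from 2A.  After n+1 steps [c, c+n] is in 2A and every
   other sum is at distance >= d >= 2 from all other sums, so the endpoints
   of any interval in 2A lie in [c, c+n]. *)

From Stdlib Require Import ZArith List Lia.
Open Scope Z_scope.

Definition separated_at (d : Z) (P : Z -> Prop) (x : Z) : Prop :=
  forall y, P y -> x <> y -> d <= Z.abs (x - y).

Definition far_sum (c N d : Z) (A : list Z) (x : Z) : Prop :=
  (x < c - d \/ c + N + d < x) /\ separated_at d (in_sumset A) x.

Record isolated_window (c N d m : Z) (A : list Z) : Prop := {
  iw_nodup : NoDup A;
  iw_length : Z.of_nat (length A) = 2 * m;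
  iw_window : interval_in_sumset A c (m - 1);
  iw_far : forall x, in_sumset A x -> ~ (c <= x <= c + m - 1) -> far_sum c N d A x;
  iw_elems : forall a, In a A -> separated_at d (fun b => In b A) a
}.

Arguments iw_nodup {c N d m A}.
Arguments iw_length {c N d m A}.
Arguments iw_window {c N d m A}.
Arguments iw_far {c N d m A}.
Arguments iw_elems {c N d m A}.

Definition abs_bound (A : list Z) : Z :=
  fold_right (fun a M => Z.max (Z.abs a) M) 0 A.

Lemma abs_bound_ge0 (A : list Z) : 0 <= abs_bound A.
Proof. induction A; simpl; lia. Qed.

Lemma abs_le_abs_bound (A : list Z) (a : Z) : In a A -> Z.abs a <= abs_bound A.
Proof.
  induction A as [|b A IH]; simpl; [easy|].
  intros [<-|Ha]; [lia|]. specialize (IH Ha). lia.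
Qed.

Lemma in_sumset_abs_le (A : list Z) (x : Z) :
  in_sumset A x -> Z.abs x <= 2 * abs_bound A.
Proof.
  intros (a & b & Ha & Hb & ->).
  pose proof (abs_le_abs_bound A a Ha). pose proof (abs_le_abs_bound A b Hb). lia.
Qed.

Lemma in_sumset_incl (A B : list Z) (x : Z) :
  incl A B -> in_sumset A x -> in_sumset B x.
Proof. intros HAB (a & b & Ha & Hb & ->). exists a, b; auto. Qed.

Lemma zones_apart (L R d k k' x y : Z) : 0 <= d -> 2 * R + d <= L -> k <> k' ->
  Z.abs (x - k * L) <= R -> Z.abs (y - k' * L) <= R -> d <= Z.abs (x - y).
Proof.
  intros Hd HL Hk Hx Hy.
  destruct (Z.lt_total k k') as [lt|[eq|gt]]; [|contradiction|].
  - assert (L <= (k' - k) * L) by nia. lia.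
  - assert (L <= (k - k') * L) by nia. lia.
Qed.

Section Extension.

Variables (c N d m L q : Z) (A : list Z).

(* [extension_sum k x]: x is a sum of [L :: q :: A] lying within a bounded
   distance of [k * L]. *)
Inductive extension_sum : Z -> Z -> Prop :=
  | ext_LL : extension_sum 2 (L + L)
  | ext_La a : In a A -> extension_sum 1 (L + a)
  | ext_Lq : extension_sum 0 (L + q)
  | ext_old x : in_sumset A x -> extension_sum 0 x
  | ext_qa a : In a A -> extension_sum (-1) (q + a)
  | ext_qq : extension_sum (-2) (q + q).

Lemma in_sumset_extension x :
  in_sumset (L :: q :: A) x -> exists k, extension_sum k x.
Proof.
  intros (a & b & Ha & Hb & ->).
  destruct Ha as [<-|[<-|Ha]]; destruct Hb as [<-|[<-|Hb]].
  - exists 2. constructor.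
  - exists 0. constructor.
  - exists 1. now constructor.
  - exists 0. rewrite Z.add_comm. constructor.
  - exists (-2). constructor.
  - exists (-1). now constructor.
  - exists 1. rewrite Z.add_comm. now constructor.
  - exists (-1). rewrite Z.add_comm. now constructor.
  - exists 0. apply ext_old. now exists a, b.
Qed.

Hypothesis HA : isolated_window c N d m A.
Hypothesis Hm : 0 <= m <= N.
Hypothesis Hd : 0 <= d.
Hypothesis HLq : L + q = c + m.
Hypothesis HL : 4 * abs_bound A + 4 * Z.abs c + 4 * N + d < L.

Lemma extension_sum_zone k x : extension_sum k x ->
  Z.abs (x - k * L) <= 2 * abs_bound A + 2 * Z.abs c + 2 * N.
Proof.
  pose proof (abs_bound_ge0 A).
  intros []; try match goal with
    | Ha : In ?a A |- _ => pose proof (abs_le_abs_bound A a Ha)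
    | Hx : in_sumset A ?x |- _ => pose proof (in_sumset_abs_le A x Hx)
    end; lia.
Qed.

Lemma extension_zones_apart k k' x y :
  extension_sum k x -> extension_sum k' y -> k <> k' -> d <= Z.abs (x - y).
Proof.
  intros Hx Hy Hk.
  apply (zones_apart L (2 * abs_bound A + 2 * Z.abs c + 2 * N) d k k'); auto; try lia.
  - now apply extension_sum_zone.
  - now apply extension_sum_zone.
Qed.

Lemma extension_far x :
  in_sumset (L :: q :: A) x -> ~ (c <= x <= c + m) -> far_sum c N d (L :: q :: A) x.
Proof.
  intros Hx Hout. destruct (in_sumset_extension x Hx) as [k Hk].
  assert (Hold : forall z, in_sumset A z -> ~ (c <= z <= c + m) -> far_sum c N d A z)
    by (intros z Hz Hzout; apply (iw_far HA); [assumption | lia]).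
  assert (Hfar : x < c - d \/ c + N + d < x).
  { pose proof (abs_bound_ge0 A). pose proof (extension_sum_zone k x Hk).
    destruct Hk as [| | |z Hz| |]; try lia. now apply (Hold z). }
  split; [exact Hfar|]. intros y Hy Hne.
  destruct (in_sumset_extension y Hy) as [k' Hk'].
  destruct (Z.eq_dec k k') as [<-|Hkk]; [|exact (extension_zones_apart k k' x y Hk Hk' Hkk)].
  revert Hk'; destruct Hk as [|a Ha| |z Hz|a Ha|]; intros Hk'; inversion Hk'; subst; try lia.
  - assert (d <= Z.abs (a - a0)) by (apply (iw_elems HA); congruence). lia.
  - now apply Hold.
  - assert (d <= Z.abs (a - a0)) by (apply (iw_elems HA); congruence). lia.
Qed.

Lemma extension_elems_separated a :
  In a (L :: q :: A) -> separated_at d (fun b => In b (L :: q :: A)) a.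
Proof.
  pose proof (abs_bound_ge0 A).
  intros Ha b Hb Hne.
  destruct Ha as [<-|[<-|Ha]]; destruct Hb as [<-|[<-|Hb]]; try lia;
    try (pose proof (abs_le_abs_bound A _ Ha)); try (pose proof (abs_le_abs_bound A _ Hb));
    try lia.
  now apply (iw_elems HA).
Qed.

Lemma isolated_window_extend : isolated_window c N d (m + 1) (L :: q :: A).
Proof.
  pose proof (abs_bound_ge0 A).
  assert (HLA : ~ In L A) by (intros Hin; pose proof (abs_le_abs_bound A L Hin); lia).
  assert (HqA : ~ In q A) by (intros Hin; pose proof (abs_le_abs_bound A q Hin); lia).
  constructor.
  - constructor; [intros [HLq'|]; [lia|contradiction]|constructor; [exact HqA|]].
    apply (iw_nodup HA).
  - simpl length. rewrite !Nat2Z.inj_succ, (iw_length HA). lia.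
  - intros j Hj. destruct (Z.eq_dec j (c + m)) as [->|Hne].
    + exists L, q. simpl. auto.
    + apply (in_sumset_incl A); [intros a Ha; simpl; auto|].
      apply (iw_window HA). lia.
  - intros x Hx Hout. apply extension_far; [assumption|lia].
  - exact extension_elems_separated.
Qed.

End Extension.

Lemma isolated_window_nil (c N d : Z) : isolated_window c N d 0 nil.
Proof.
  constructor; simpl.
  - constructor.
  - reflexivity.
  - intros j Hj. lia.
  - intros x (a & b & [] & _).
  - intros a [].
Qed.

Definition far_point (c N d : Z) (A : list Z) : Z :=
  4 * abs_bound A + 4 * Z.abs c + 4 * N + d + 1.

Fixpoint window_set (c N d : Z) (k : nat) : list Z :=
  match k with
  | O => nil
  | S k =>
      let A := window_set c N d k in
      let L := far_point c N d A in
      L :: (c + Z.of_nat k - L) :: A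
  end.

Lemma window_set_isolated (c N d : Z) (k : nat) :
  0 <= d -> Z.of_nat k <= N + 1 ->
  isolated_window c N d (Z.of_nat k) (window_set c N d k).
Proof.
  intros Hd. induction k as [|k IH]; intros Hk; [apply isolated_window_nil|].
  rewrite Nat2Z.inj_succ, <-Z.add_1_r. simpl.
  apply isolated_window_extend; try lia.
  - apply IH. lia.
  - unfold far_point. lia.
Qed.

Definition sums_isolated_outside (A : list Z) (c n d : Z) : Prop :=
  forall x y, in_sumset A x -> in_sumset A y -> x <> y ->
    ~ (c <= x <= c + n) -> d <= Z.abs (x - y).

Lemma consecutive_sums_in_window (A : list Z) (c n d x : Z) : 2 <= d ->
  sums_isolated_outside A c n d ->
  in_sumset A x -> in_sumset A (x + 1) -> c <= x /\ x + 1 <= c + n.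
Proof.
  intros Hd Hsep Hx Hx1.
  assert (Hin : forall u v, in_sumset A u -> in_sumset A v -> Z.abs (u - v) = 1 ->
    c <= u <= c + n).
  { intros u v Hu Hv Huv. destruct (Z.le_gt_cases c u), (Z.le_gt_cases u (c + n)); try lia;
      pose proof (Hsep u v Hu Hv ltac:(lia) ltac:(lia)); lia. }
  pose proof (Hin x (x + 1) Hx Hx1 ltac:(lia)).
  pose proof (Hin (x + 1) x Hx1 Hx ltac:(lia)).
  lia.
Qed.

Lemma ell2sharp_eq_of_isolated (A : list Z) (c n d : Z) : 1 <= n -> 2 <= d ->
  interval_in_sumset A c n ->
  sums_isolated_outside A c n d ->
  ell2sharp_eq A n.
Proof.
  intros Hn Hd Hcov Hsep. split; [exact Hn|]. split; [now exists c|].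
  intros m c' Hm Hcov'.
  pose proof (consecutive_sums_in_window A c n d c' Hd Hsep
    (Hcov' c' ltac:(lia)) (Hcov' (c' + 1) ltac:(lia))).
  pose proof (consecutive_sums_in_window A c n d (c' + m - 1) Hd Hsep
    (Hcov' (c' + m - 1) ltac:(lia)) (Hcov' (c' + m - 1 + 1) ltac:(lia))).
  lia.
Qed.

Theorem mainTheorem4 (c n d : Z) (hn : 1 <= n) (hd : 2 <= d) :
  exists A : list Z,
    NoDup A /\ Z.of_nat (length A) = 2 * n + 2 /\
    interval_in_sumset A c n /\
    (forall x y, in_sumset A x -> in_sumset A y -> x <> y ->
       ~ (c <= x <= c + n) -> d <= Z.abs (x - y)) /\
    ell2sharp_eq A n.
Proof.
  pose proof (window_set_isolated c n d (Z.to_nat (n + 1)) ltac:(lia) ltac:(lia)) as HA.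
  rewrite Z2Nat.id in HA by lia.
  set (A := window_set c n d (Z.to_nat (n + 1))) in HA.
  assert (Hcov : interval_in_sumset A c n).
  { intros j Hj. apply (iw_window HA). lia. }
  assert (Hsep : sums_isolated_outside A c n d).
  { intros x y Hx Hy Hne Hout. apply (iw_far HA x Hx); [lia | assumption | exact Hne]. }
  exists A. split; [|split; [|split; [|split]]].
  - exact (iw_nodup HA).
  - rewrite (iw_length HA). lia.
  - exact Hcov.
  - exact Hsep.
  - exact (ell2sharp_eq_of_isolated A c n d hn hd Hcov Hsep).
Qed.
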